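(* Let $\tau$ be a tuple of positive integers, $0\le k\le\ell$, and $\hat P_\tau=C\sqcup O$ the $k$-decomposition. Let $F$ be a nonempty face of $\mathcal{O}_{C,O}(\tau)$ such that none of the nonnegativity inequalities $x_p\ge0$ ($p\in C$) and none of the chain inequalities holds with equality at every point of $F$ (i.e. $F$ is cut out by order inequalities only). Let $\varphi$ be the partition of $O$ associated with $F$ and $\pi=\varphi\cup\{\{c\}:c\in C\}$. Then $\pi$ is compatible, so the quotient poset $\hat P_\tau/\pi$ is defined; its minimum is $\{\hat0\}$ and its maximum is the block $T\in\varphi$ containing $\hat1$. Let $C_\pi=\{\{c\}:c\in C\}$, and let $\mathcal{O}_{C_\pi,\varphi}(\hat P_\tau/\pi)\subseteq\mathbb{R}^{\pi}$ be the set of $(x_B)_{B\in\pi}$ with $x_{\{\hat0\}}=0$, $x_T=1$, $x_B\ge 0$ for $B\in C_\pi$, $x_B\le x_{B'}$ for all $B,B'\in\varphi$ with $B$ covered by $B'$ in $\hat P_\tau/\pi$, and $x_{B_1}+\dots+x_{B_r}\le x_A$ for every saturated chain $\{\hat0\}\prec B_1\prec\dots\prec B_r\prec A$ in $\hat P_\tau/\pi$ with $B_1,\dots,B_r\in C_\pi$, $A\in\varphi$, $r\ge0$. Then the map $$\mathcal{O}_{C_\pi,\varphi}(\hat P_\tau/\pi)\to F,\quad (x_B)_{B\in\pi}\mapsto (x_{q(p)})_{p\in\hat P_\tau}$$ is an affine isomorphism, where $q:\hat P_\tau\to\hat P_\tau/\pi$ sends $p$ to its block. In particular the codimension of $F$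 equals $|O|-|\varphi|$.
   Context: Let $\tau=(\tau_1,\dots,\tau_\ell)$ be positive integers, $|\tau|=\sum_i\tau_i$. The poset $P_\tau$ has elements $y^i_j$ ($1\le i\le\ell$, $1\le j\le\tau_i$) with $y^i_j<y^{i'}_{j'}$ iff $i<i'$; $Y^i=\{y^i_1,\dots,y^i_{\tau_i}\}$. $\hat P_\tau=P_\tau\cup\{\hat0,\hat1\}$ with new minimum $\hat0$ and maximum $\hat1$, $Y^0=\{\hat0\}$, $Y^{\ell+1}=\{\hat1\}$; $\prec$ is the covering relation. The $k$-decomposition is $C=Y^0\cup\dots\cup Y^k$, $O=Y^{k+1}\cup\dots\cup Y^{\ell+1}$. The chain-order polytope $\mathcal{O}_{C,O}(\tau)\subseteq\mathbb{R}^{\hat P_\tau}$ consists of all $x$ with $x_{\hat0}=0$, $x_{\hat1}=1$, $x_p\ge0$ for $p\in C$ (nonnegativity inequalities), $x_a\le x_b$ for $a,b\in O$ with $a\prec b$ (order inequalities), and $x_{p_1}+\dots+x_{p_k}\le x_q$ for all $p_i\in Y^i$ ($1\le i\le k$), $q\in Y^{k+1}$ (chain inequalities). Codimension of a face $F$ is $|\tau|-\dim F$. The partition $\varphi$ of $O$ associated with $F$ has as blocks the connected components of the graph with vertex set $O$ and edges $\{a,b\}$ for all $a\prec b$ in $O$ with $x_a=x_b$ for every $x\in F$. A partition $\pi$ of $\hat P_\tau$ is compatible if the transitive closure of the relation ''$B\le B'$ iff $p\le q$ for some $p\in B$, $q\in B'$'' on blocks is antisymmetric; it is then a partial order, and $\hat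 P_\tau/\pi$ denotes the set of blocks with this order (the quotient poset). *)

From HB Require Import structures.
From mathcomp Require Import all_boot all_order all_algebra.
From Stdlib Require Import Relations.
Set Implicit Arguments. Unset Strict Implicit. Unset Printing Implicit Defensive.
Import Order.TTheory GRing.Theory Num.Theory.

Section Poset.
Variable tau : seq nat.

(* size of level Y^i of \hat P_tau, i = 0 .. size tau + 1 *)
Definition lv (i : nat) : nat :=
  if i == 0 then 1 else if i <= size tau then nth 0 tau i.-1
  else if i == (size tau).+1 then 1 else 0.

Definition bnd : nat := (\max_(t <- tau) t).+1.

(* element y^i_j  is encoded as (i, j-1) with j-1 < |Y^i| *)
Definition Pt : finType := {p : 'I_(size tau).+2 * 'I_bnd | p.2 < lv p.1}.

Definition lvl (p : Pt) : nat := (sval p).1.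

Lemma lv_first : lv 0 = 1. Proof. by []. Qed.
Lemma lv_last : lv (size tau).+1 = 1.
Proof. by rewrite /lv /= ltnn eqxx. Qed.

Lemma hat0_ok : 0 < lv (@ord0 (size tau).+1). Proof. by []. Qed.
Lemma hat1_ok : 0 < lv (@ord_max (size tau).+1). Proof. by rewrite /= lv_last. Qed.
Definition hat0 : Pt := exist (fun p : 'I_(size tau).+2 * 'I_bnd => p.2 < lv p.1)
  (ord0, Ordinal (ltn0Sn _)) hat0_ok.
Definition hat1 : Pt := exist (fun p : 'I_(size tau).+2 * 'I_bnd => p.2 < lv p.1)
  (ord_max, Ordinal (ltn0Sn _)) hat1_ok.

Definition ple (p q : Pt) : bool := (p == q) || (lvl p < lvl q).
Definition pcov (p q : Pt) : bool := lvl q == (lvl p).+1.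

Definition Cset (k : nat) : {set Pt} := [set p | lvl p <= k].
Definition Oset (k : nat) : {set Pt} := [set p | k < lvl p].
End Poset.

Local Open Scope ring_scope.

Definition chain_poly (R : realFieldType) (tau : seq nat) (k : nat)
  (x : Pt tau -> R) : Prop :=
  [/\ x (hat0 tau) = 0, x (hat1 tau) = 1,
      (forall p, p \in Cset tau k -> 0 <= x p),
      (forall a b, a \in Oset tau k -> b \in Oset tau k -> pcov a b -> x a <= x b) &
      (forall (ps : 'I_k -> Pt tau) (q : Pt tau),
          (forall i : 'I_k, lvl (ps i) = i.+1) -> lvl q = k.+1 ->
          \sum_(i < k) x (ps i) <= x q)].

Section Generic.
Variables (R : realFieldType) (T : finType).

Definition is_face (P F : (T -> R) -> Prop) : Prop :=
  exists (c : T -> R) (d : R),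
    (forall x, P x -> \sum_p c p * x p <= d) /\
    (forall x, F x <-> P x /\ \sum_p c p * x p = d).

Definition affdim_ge (S : (T -> R) -> Prop) (d : nat) : Prop :=
  exists x0, S x0 /\ exists ys : 'I_d -> T -> R, (forall i, S (ys i)) /\
    row_free (\matrix_(i < d, j < #|T|) (ys i (enum_val j) - x0 (enum_val j))).

Definition affdim (S : (T -> R) -> Prop) (d : nat) : Prop :=
  affdim_ge S d /\ ~ affdim_ge S d.+1.

Definition face_edge (F : (T -> R) -> Prop) (O : {set T}) (cov : rel T) (a b : T) : Prop :=
  [/\ a \in O, b \in O, (cov a b \/ cov b a) & forall x, F x -> x a = x b].

Definition is_assoc_partition (F : (T -> R) -> Prop) (O : {set T}) (cov : rel T)
  (phi : {set {set T}}) : Prop :=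
  forall B, B \in phi <-> exists2 a, a \in O &
     forall b, b \in B <-> (b \in O /\ clos_refl_trans T (face_edge F O cov) a b).
End Generic.

Section Quotient.
Variable T : finType.
Variable le : rel T.
Variable pi : {set {set T}}.

Definition blk_le (B B' : {set T}) : bool := [exists p in B, exists q in B', le p q].
Definition qrel (B B' : {set T}) : Prop := [/\ B \in pi, B' \in pi & blk_le B B'].
Definition qle : {set T} -> {set T} -> Prop := clos_trans _ qrel.
Definition compatible : Prop := forall B B', qle B B' -> qle B' B -> B = B'.
Definition qlt (B B' : {set T}) : Prop := qle B B' /\ B <> B'.
Definition qcov (B B' : {set T}) : Prop :=
  qlt B B' /\ ~ (exists D, qlt B D /\ qlt D B').

Fixpoint satchain (a : {set T}) (s : seq {set T}) (A : {set T}) : Prop :=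
  match s with
  | [::] => qcov a A
  | b :: s' => qcov a b /\ satchain b s' A
  end.

(* the polytope O_{C_pi, phi}(\hat P / pi); coordinates off pi are irrelevant *)
Definition quot_poly (R : realFieldType) (Cpi phi : {set {set T}}) (bot top : {set T})
  (y : {set T} -> R) : Prop :=
  [/\ y bot = 0, y top = 1,
      (forall B, B \in Cpi -> 0 <= y B),
      (forall B B', B \in phi -> B' \in phi -> qcov B B' -> y B <= y B') &
      (forall (s : seq {set T}) (A : {set T}), all (fun B => B \in Cpi) s ->
          A \in phi -> satchain bot s A -> \sum_(B <- s) y B <= y A)].
End Quotient.

(* Take a point z in the relative interior of F: it satisfies with equality exactly the
   inequalities that are tight on F.  Along a chain of O, z increases strictly between
   distinct blocks of phi (equality would make the order inequality tight, i.e. an edge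
   of phi), so ordering the singletons of C by level and the blocks of phi by the value of
   z gives a strict order containing the quotient order: pi is compatible.  By hypothesis
   the only inequalities tight on F are x_hat0 >= 0 and order inequalities inside blocks,
   so F consists of the points of the polytope that are constant on the blocks, and on
   such points the inequalities of O_{C,O}(tau) become those of the quotient polytope: a
   chain y^1 < ... < y^k < q turns into a saturated chain of singletons covered by a block
   below the block of q.  Finally z may be perturbed inside F along the indicator of each
   block other than {hat0} and the top block, and these |pi| - 2 directions span F - z. *)

From HB Require Import structures.
From mathcomp Require Import all_boot all_order all_algebra.
From mathcomp Require Import boolp.
From mathcomp Require Import ring lra zify.
From Stdlib Require Import Relations.
Set Implicit Arguments. Unset Strict Implicit. Unset Printing Implicit Defensive.
Import Order.TTheory GRing.Theory Num.Theory.

Section PolytopeFaces.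
Local Open Scope ring_scope.
Variables (R : realFieldType) (T I : finType) (t0 t1 : T).
Variables (admissible : pred I) (form : I -> (T -> R) -> R).
Hypothesis formD : forall i a b x y,
  form i (fun t => a * x t + b * y t) = a * form i x + b * form i y.

Definition in_poly (x : T -> R) : Prop :=
  [/\ x t0 = 0, x t1 = 1 & forall i, admissible i -> 0 <= form i x].

Variable F : (T -> R) -> Prop.
Hypothesis F_face : is_face in_poly F.
Hypothesis F_neq0 : exists x, F x.

Definition tight i := forall x, F x -> form i x = 0.

Definition in_relint z := F z /\ forall i, admissible i -> ~ tight i -> 0 < form i z.

Lemma formDr i e x v : form i (fun t => x t + e * v t) = form i x + e * form i v.
Proof.
rewrite -[in RHS](mul1r (form i x)) -formD.
by congr (form i); apply: funext => t; rewrite mul1r.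
Qed.

Lemma weighted_sumD (c : T -> R) a b x y :
  \sum_p c p * (a * x p + b * y p) = a * \sum_p c p * x p + b * \sum_p c p * y p.
Proof.
rewrite !mulr_sumr -big_split /=; apply: eq_bigr => p _.
by rewrite mulrDr !mulrA ![c p * _]mulrC.
Qed.

Lemma face_convex a b x y : 0 <= a -> 0 <= b -> a + b = 1 -> F x -> F y ->
  F (fun t => a * x t + b * y t).
Proof.
have [c [d [_ FE]]] := F_face.
move=> a0 b0 ab /FE[[x0 x1 xP] xd] /FE[[y0 y1 yP] yd]; apply/FE; split; last first.
  by rewrite weighted_sumD xd yd -mulrDl ab mul1r.
split; [by rewrite x0 y0 !mulr0 addr0 | by rewrite x1 y1 !mulr1 |].
by move=> i /[dup] /xP ? /yP ?; rewrite formD addr_ge0 ?mulr_ge0.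
Qed.

(* Averaging witnesses of non-tightness, one inequality at a time. *)
Lemma face_relint : exists z, in_relint z.
Proof.
suff [z [Fz zP]] : exists z, F z /\
    forall i, i \in enum I -> admissible i -> ~ tight i -> 0 < form i z.
  by exists z; split => // i; apply: zP; rewrite mem_enum.
elim: (enum I) => [|i s [z [Fz zP]]]; first by have [x Fx] := F_neq0; exists x.
have [[iA i_loose]|] := EM (admissible i /\ ~ tight i); last first.
  move=> iN; exists z; split => // j; rewrite inE => /predU1P[->|] //; last exact: zP.
  by move=> iA i_loose; case: iN.
have [x [Fx xi]] : exists x, F x /\ form i x != 0.
  apply/not_existsP => xN; apply: i_loose => x Fx; apply/eqP.
  exact: contra_notT (conj Fx) (xN x).
have [c [d [_ FE]]] := F_face.
have /FE[[_ _ zP'] _] := Fz; have /FE[[_ _ xP'] _] := Fx.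
have h0 : (0 : R) <= 2^-1 by rewrite invr_ge0.
have h1 : (0 : R) < 2^-1 by rewrite invr_gt0.
exists (fun t => 2^-1 * z t + 2^-1 * x t); split; first by apply: face_convex => //; lra.
move=> j; rewrite inE formD => /predU1P[->|js] jA j_loose.
  by rewrite ltr_wpDl ?mulr_ge0 ?zP' // mulr_gt0 // lt_def xi xP'.
by rewrite ltr_wpDr ?mulr_ge0 ?xP' // mulr_gt0 ?zP.
Qed.

Lemma poly_perturb z v : in_relint z -> v t0 = 0 -> v t1 = 0 ->
  (forall i, admissible i -> tight i -> form i v = 0) ->
  exists2 e, 0 < e & in_poly (fun t => z t + e * v t).
Proof.
move=> [Fz zP] v0 v1 vT; have [c [d [_ FE]]] := F_face.
have /FE[[z0 z1 zP'] _] := Fz.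
suff [e e0 eP] : exists2 e, 0 < e &
    forall i, i \in enum I -> admissible i -> 0 <= form i (fun t => z t + e * v t).
  exists e => //; split; [by rewrite z0 v0 mulr0 addr0 | by rewrite z1 v1 mulr0 addr0 |].
  by move=> i; apply: eP; rewrite mem_enum.
elim: (enum I) => [|i s [e e0 eP]]; first by exists 1.
have [[iA i_loose]|iN] := EM (admissible i /\ ~ tight i); last first.
  exists e => // j; rewrite inE => /predU1P[-> jA|]; last exact: eP.
  have i_tight : tight i by apply: contra_notP iN.
  by rewrite formDr (i_tight z Fz) vT // mulr0 addr0.
(* shrink [e] so that [form i z + e * form i v] stays positive *)
set a := form i z; set f := form i v; have a0 : 0 < a by apply: zP.
have f1 : 0 < `|f| + 1 by rewrite ltr_wpDl.
set e' := Num.min e (a / (`|f| + 1)).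
have e'0 : 0 < e' by rewrite lt_min e0 divr_gt0.
have e'e : e' <= e by rewrite ge_min lexx.
have e'a : e' * (`|f| + 1) <= a by rewrite -ler_pdivlMr // ge_min lexx orbT.
exists e' => // j; rewrite inE formDr => /predU1P[-> _|js jA].
  have : - `|f| <= f by rewrite lerNnormlW.
  by rewrite -/a -/f; nra.
have := eP j js jA; rewrite formDr; have := zP' j jA.
by case: (lerP 0 (form j v)) => hv hz he; nra.
Qed.

Lemma face_of_tight x : in_poly x ->
  (forall i, admissible i -> tight i -> form i x = 0) -> F x.
Proof.
(* For small [e > 0], [z + e (z - x)] stays in the polytope, which pushes [x] onto the
   supporting hyperplane. *)
move=> xP xT; have [z [Fz zP]] := face_relint.
have [c [d [c_valid FE]]] := F_face; have /FE[[z0 z1 _] zd] := Fz.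
case: (xP) => x0 x1 _.
pose v t := z t + (-1) * x t.
have vT i : admissible i -> tight i -> form i v = 0.
  by move=> iA i_tight; rewrite /v formDr (i_tight z Fz) xT ?mulr0 ?addr0.
have v0 : v t0 = 0 by rewrite /v z0 x0 mulr0 addr0.
have v1 : v t1 = 0 by rewrite /v z1 x1 mulN1r subrr.
have [e e0 eP] := poly_perturb (conj Fz zP) v0 v1 vT.
have ev : \sum_p c p * (z p + e * v p) = (1 + e) * d - e * \sum_p c p * x p.
  rewrite -zd !mulr_sumr -sumrB; apply: eq_bigr => p _; rewrite /v; ring.
have := c_valid _ eP; have := c_valid _ xP; rewrite ev => xd dx.
apply/FE; split => //; apply/eqP; rewrite eq_le xd /=.
by rewrite -(ler_pM2l e0); lra.
Qed.

Lemma face_perturb z v : in_relint z -> v t0 = 0 -> v t1 = 0 ->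
  (forall i, admissible i -> tight i -> form i v = 0) ->
  exists2 e, 0 < e & F (fun t => z t + e * v t).
Proof.
move=> zR v0 v1 vT; have [e e0 eP] := poly_perturb zR v0 v1 vT.
exists e => //; apply: face_of_tight eP _ => i iA iT.
by rewrite formDr (iT z zR.1) vT // mulr0 addr0.
Qed.
End PolytopeFaces.

Section FiniteCovers.
Variables (X : finType) (lt : X -> X -> Prop).
Hypothesis lt_trans : forall a b c, lt a b -> lt b c -> lt a c.
Hypothesis lt_irrefl : forall a, ~ lt a a.

Definition covers a b := lt a b /\ ~ (exists c, lt a c /\ lt c b).

Lemma interval_proper a b c : lt a c -> lt c b ->
  [set d | `[< lt a d /\ lt d c >]] \proper [set d | `[< lt a d /\ lt d b >]].
Proof.
move=> ac cb; apply/properP; split.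
  apply/subsetP => d; rewrite !inE => /asboolP[ad dc].
  by apply/asboolP; split => //; apply: lt_trans cb.
by exists c; rewrite !inE; [apply/asboolP | apply/asboolPn => -[_ /lt_irrefl]].
Qed.

Lemma cover_below a b : lt a b -> exists c, covers a c /\ (c = b \/ lt c b).
Proof.
move: {2}#|_| (leqnn #|[set d | `[< lt a d /\ lt d b >]]|) => n.
elim: n b => [|n IH] b size_ab ab.
  exists b; split; last by left.
  split => // -[c acb]; move: size_ab; rewrite leqn0 cards_eq0 => /eqP/setP/(_ c).
  by rewrite !inE => /asboolP.
have [[c [ac cb]]|no_mid] := EM (exists c, lt a c /\ lt c b); last first.
  by exists b; split => //; left.
have [|d [ad dc]] := IH c _ ac.
  by rewrite -ltnS; apply: leq_trans size_ab; apply: proper_card; apply: interval_proper.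
by exists d; split => //; right; case: dc => [->|/lt_trans]; last apply.
Qed.

Lemma cover_ind (S : X -> Prop) (P : X -> X -> Prop) :
  (forall a b, S a -> lt a b -> S b) ->
  (forall a b c, P a b -> P b c -> P a c) ->
  (forall a b, S a -> covers a b -> P a b) ->
  forall a b, S a -> lt a b -> P a b.
Proof.
move=> S_up P_trans P_cov a.
move: {2}#|_| (leqnn #|[set d | `[< lt a d >]]|) => n.
elim: n a => [|n IH] a size_a b Sa ab.
  by move: size_a; rewrite leqn0 cards_eq0 => /eqP/setP/(_ b); rewrite !inE => /asboolP.
have [c [ac [<-|cb]]] := cover_below ab; first exact: P_cov.
apply: P_trans (P_cov _ _ Sa ac) (IH c _ b (S_up _ _ Sa ac.1) cb).
rewrite -ltnS; apply: leq_trans size_a; apply: proper_card; apply/properP; split.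
  by apply/subsetP => d; rewrite !inE => /asboolP cd; apply/asboolP; apply: lt_trans ac.1 cd.
by exists c; rewrite !inE; [apply/asboolP; case: ac | apply/asboolPn => /lt_irrefl].
Qed.
End FiniteCovers.

Lemma sum_ord_ltn (b m : nat) : \sum_(j < b) (j < m : nat) = minn m b.
Proof.
elim: b => [|b IH]; first by rewrite big_ord0 minn0.
by rewrite big_ord_recr /= IH; case: (ltnP b m) => h /=; lia.
Qed.

Section Levels.
Variable tau : seq nat.
Hypothesis tau_gt0 : all (fun t => 0 < t) tau.
Local Notation PT := (Pt tau).

Lemma lvl_le_max (p : PT) : lvl p <= (size tau).+1.
Proof. by rewrite /lvl -ltnS; case: (sval p).1. Qed.

Lemma lvl_hat0 : lvl (hat0 tau) = 0. Proof. by []. Qed.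

Lemma lvl_hat1 : lvl (hat1 tau) = (size tau).+1. Proof. by []. Qed.

Lemma lvl_eq0 (p : PT) : lvl p = 0 -> p = hat0 tau.
Proof.
case: p => [[i j] ij]; rewrite /lvl /= => i0; apply: val_inj => /=.
have -> : i = ord0 by apply: val_inj.
by congr pair; apply/val_inj/eqP; move: ij; rewrite i0 ltnS leqn0.
Qed.

Lemma lvl_eq_max (p : PT) : lvl p = (size tau).+1 -> p = hat1 tau.
Proof.
case: p => [[i j] ij]; rewrite /lvl /= => imax; apply: val_inj => /=.
have -> : i = ord_max by apply: val_inj.
by congr pair; apply/val_inj/eqP; move: ij; rewrite imax lv_last ltnS leqn0.
Qed.

Lemma ple_trans (a b c : PT) : ple a b -> ple b c -> ple a c.
Proof.
rewrite /ple => /orP[/eqP -> //|ab] /orP[/eqP <-|bc]; first by rewrite ab orbT.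
by rewrite (ltn_trans ab bc) orbT.
Qed.

Lemma ple_hat0 (p : PT) : ple (hat0 tau) p.
Proof.
rewrite /ple lvl_hat0 lt0n; have [//|ne] := eqVneq (hat0 tau) p.
by apply/negP => /eqP /lvl_eq0 p0; rewrite p0 eqxx in ne.
Qed.

Lemma ple_hat1 (p : PT) : ple p (hat1 tau).
Proof.
rewrite /ple lvl_hat1 ltn_neqAle lvl_le_max andbT; have [//|ne] := eqVneq p (hat1 tau).
by apply/negP => /eqP /lvl_eq_max p1; rewrite p1 eqxx in ne.
Qed.

Lemma lv_gt0 i : i <= (size tau).+1 -> 0 < lv tau i.
Proof.
rewrite /lv; case: eqP => // /eqP i0 i_le; case: ifP => [i_tau|i_tau]; last first.
  by rewrite (_ : i == _) // eqn_leq i_le ltnNge i_tau.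
by move/all_nthP: tau_gt0; apply; rewrite prednK ?lt0n.
Qed.

Lemma lv_le_bnd i : lv tau i <= bnd tau.
Proof.
rewrite /bnd /lv; case: eqP => [//|/eqP i0]; case: ifP => [i_tau|_]; last by case: ifP.
apply: leq_trans (leqnSn _); apply: leq_bigmax_seq => //; apply: mem_nth.
by case: i i0 i_tau.
Qed.

Lemma exists_lvl i : i <= (size tau).+1 -> exists p : PT, lvl p = i.
Proof.
move=> i_le; have bnd_gt0 : 0 < bnd tau by [].
by exists (exist _ (Ordinal (i_le : i < (size tau).+2), Ordinal bnd_gt0) (lv_gt0 i_le)).
Qed.

Lemma card_Pt : #|{: PT}| = (sumn tau).+2.
Proof.
rewrite card_sig -sum1_card big_mkcond /=.
rewrite -(pair_bigA _ (fun (i : 'I_(size tau).+2) (j : 'I_(bnd tau)) =>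
  if j < lv tau i then 1 else 0)) /=.
rewrite (eq_bigr (fun i : 'I_(size tau).+2 => lv tau i)); last first.
  move=> i _; rewrite (eq_bigr (fun j : 'I_(bnd tau) => (j < lv tau i : nat))).
    by rewrite sum_ord_ltn; apply/minn_idPl; apply: lv_le_bnd.
  by move=> j _; case: ifP.
rewrite big_ord_recl big_ord_recr /= lv_first lv_last.
rewrite (eq_bigr (fun i : 'I_(size tau) => nth 0 tau i)); last first.
  by move=> i _; rewrite /lv /= /bump /= add1n add0n ltn_ord.
by rewrite sumnE (big_nth 0) big_mkord add1n addn1.
Qed.

Lemma path_pcov_lvl (a : PT) s i : path (@pcov tau) a s -> i < size s ->
  lvl (nth a s i) = lvl a + i.+1.
Proof.
elim: s a i => [//|b s IH] a [|i] /andP[/eqP ab bs] i_lt; first by rewrite ab addn1.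
by rewrite /= (set_nth_default b) // IH // ab addSnnS.
Qed.

Lemma lvl_last_path (a : PT) s : path (@pcov tau) a s -> lvl (last a s) = lvl a + size s.
Proof.
elim: s a => [|b s IH] a; first by rewrite addn0.
by case/andP => /eqP ab /IH; rewrite [last _ _]/= => ->; rewrite ab addSnnS.
Qed.

Lemma path_pcov_enum k (ps : 'I_k -> PT) : (forall i, lvl (ps i) = i.+1) ->
  path (@pcov tau) (hat0 tau) [seq ps i | i <- enum 'I_k].
Proof.
move=> ps_lvl; apply/(pathP (hat0 tau)) => i; rewrite size_map size_enum_ord => i_lt.
rewrite /pcov (nth_map (Ordinal i_lt)) ?size_enum_ord // ps_lvl nth_enum_ord //.
case: i i_lt => [|i] i_lt //=.
by rewrite (nth_map (Ordinal i_lt)) ?size_enum_ord 1?ltnW // ps_lvl nth_enum_ord 1?ltnW.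
Qed.

Lemma pcov_lvl_ind k (P : PT -> PT -> Prop) :
  (forall a b, a \in Oset tau k -> pcov a b -> P a b) ->
  (forall a m b, a \in Oset tau k -> P a m -> P m b -> P a b) ->
  forall a b, a \in Oset tau k -> lvl a < lvl b -> P a b.
Proof.
move=> P_cov P_trans a b; rewrite inE => ak ab.
have [n lb] : exists n, lvl b = lvl a + n.+1 by exists (lvl b - lvl a).-1; lia.
elim: n b lb {ab} => [|n IH] b lb.
  by apply: P_cov; rewrite ?inE // /pcov lb addn1.
have [m lm] : exists m : PT, lvl m = lvl a + n.+1.
  by apply: exists_lvl; have := lvl_le_max b; lia.
apply: (P_trans a m); rewrite ?inE //; first exact: IH.
apply: P_cov; rewrite ?inE /pcov lm ?lb; first lia.
by apply/eqP; lia.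
Qed.
End Levels.

Local Open Scope ring_scope.

Section ChainPolytope.
Variables (R : realFieldType) (tau : seq nat) (k : nat).
Local Notation PT := (Pt tau).

(* Indices of the nonnegativity, order and chain inequalities, in this order. *)
Definition chain_index := ((PT + (PT * PT)) + ({ffun 'I_k -> PT} * PT))%type.

Definition chain_admissible (i : chain_index) : bool :=
  match i with
  | inl (inl p) => p \in Cset tau k
  | inl (inr (a, b)) => [&& a \in Oset tau k, b \in Oset tau k & pcov a b]
  | inr (ps, q) => [forall j, lvl (ps j) == j.+1] && (lvl q == k.+1)
  end.

Definition chain_form (i : chain_index) (x : PT -> R) : R :=
  match i with
  | inl (inl p) => x p
  | inl (inr (a, b)) => x b - x a
  | inr (ps, q) => x q - \sum_(j < k) x (ps j)
  end.

Lemma chain_formD i a b x y :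
  chain_form i (fun t => a * x t + b * y t) = a * chain_form i x + b * chain_form i y.
Proof.
case: i => [[p|[u v]]|[ps q]] /=; try ring.
by rewrite big_split /= -!mulr_sumr; ring.
Qed.

Lemma chain_polyE x :
  chain_poly k x <-> in_poly (hat0 tau) (hat1 tau) chain_admissible chain_form x.
Proof.
split=> [[x0 x1 xC xO xch]|[x0 x1 xP]].
  split=> // -[[p|[a b]]|[ps q]] /=; first exact: xC.
    by case/and3P => aO bO ab; rewrite subr_ge0; apply: xO.
  case/andP => /forallP ps_lvl /eqP q_lvl; rewrite subr_ge0; apply: xch => // j.
  exact/eqP.
split=> // [p pC|a b aO bO ab|ps q ps_lvl q_lvl]; first exact: (xP (inl (inl p))).
  by have := xP (inl (inr (a, b))); rewrite /= aO bO ab subr_ge0; apply.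
have := xP (inr ([ffun j => ps j], q)); rewrite /= q_lvl eqxx andbT subr_ge0.
under eq_bigr do rewrite ffunE.
by apply; apply/forallP => j; rewrite ffunE ps_lvl.
Qed.

Lemma chain_ineq_pathP (x : PT -> R) :
  (forall (ps : 'I_k -> PT) q, (forall i : 'I_k, lvl (ps i) = i.+1) -> lvl q = k.+1 ->
     \sum_(i < k) x (ps i) <= x q) <->
  (forall cs q, path (@pcov tau) (hat0 tau) cs -> size cs = k -> lvl q = k.+1 ->
     \sum_(c <- cs) x c <= x q).
Proof.
split=> [xch cs q cs_path cs_size q_lvl|xch ps q ps_lvl q_lvl].
  rewrite (big_nth (hat0 tau)) cs_size big_mkord; apply: xch q_lvl => i.
  by rewrite path_pcov_lvl // cs_size.
rewrite -big_enum -(big_map ps predT x); apply: xch q_lvl; first exact: path_pcov_enum.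
by rewrite size_map size_enum_ord.
Qed.
End ChainPolytope.

Lemma trivIset_eq (T : finType) (P : {set {set T}}) :
  (forall B1 B2 p, B1 \in P -> B2 \in P -> p \in B1 -> p \in B2 -> B1 = B2) -> trivIset P.
Proof.
move=> Peq; apply/trivIsetP => B1 B2 B1P B2P; apply: contraR => /pred0Pn[p /andP[pB1 pB2]].
by apply/eqP; apply: Peq pB2.
Qed.

Section OrderFace.
Variables (R : realFieldType) (tau : seq nat) (k : nat).
Variables (F : (Pt tau -> R) -> Prop) (phi : {set {set Pt tau}}).
Local Notation PT := (Pt tau).
Local Notation C := (Cset tau k).
Local Notation O := (Oset tau k).
Hypothesis tau_gt0 : all (fun t => 0 < t)%N tau.
Hypothesis k_le : (k <= size tau)%N.
Hypothesis F_face : is_face (@chain_poly R tau k) F.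
Hypothesis F_neq0 : exists x, F x.
Hypothesis C_loose : forall p, p \in C -> p != hat0 tau -> ~ (forall x, F x -> x p = 0).
Hypothesis chain_loose : forall (ps : 'I_k -> PT) (q : PT),
  (forall i : 'I_k, lvl (ps i) = i.+1) -> lvl q = k.+1 ->
  ~ (forall x, F x -> \sum_(i < k) x (ps i) = x q).
Hypothesis phiP : is_assoc_partition F O (@pcov tau) phi.

Local Notation admissible := (@chain_admissible tau k).
Local Notation form := (@chain_form R tau k).
Local Notation tight := (tight form F).
Local Notation in_relint := (in_relint admissible form F).

Lemma F_chain_face : is_face (in_poly (hat0 tau) (hat1 tau) admissible form) F.
Proof.
have [c [d [c_valid FE]]] := F_face; exists c, d; split=> [x /chain_polyE|x]; first exact: c_valid.
by rewrite FE chain_polyE.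
Qed.

Lemma F_chain x : F x -> chain_poly k x.
Proof. by have [c [d [_ FE]]] := F_face => /FE[]. Qed.

Lemma inC p : (p \in C) = (lvl p <= k)%N. Proof. by rewrite inE. Qed.

Lemma inO p : (p \in O) = (k < lvl p)%N. Proof. by rewrite inE. Qed.

Lemma CO_disjoint p : p \in C -> p \in O -> False.
Proof. by rewrite inC inO => /leq_ltn_trans/[apply]; rewrite ltnn. Qed.

Lemma hat0_C : hat0 tau \in C. Proof. by rewrite inC. Qed.

Lemma hat1_O : hat1 tau \in O. Proof. by rewrite inO lvl_hat1 ltnS k_le. Qed.

Lemma ple_O a b : a \in O -> ple a b -> b \in O.
Proof. by rewrite /ple !inO => aO /orP[/eqP <- //|]; apply: ltn_trans. Qed.

Local Notation edge := (face_edge F O (@pcov tau)).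
Local Notation linked := (clos_refl_trans PT edge).

Lemma edge_sym a b : edge a b -> edge b a.
Proof. by case=> aO bO ab xab; split=> // [|x /xab //]; case: ab; [right | left]. Qed.

Lemma linked_sym a b : linked a b -> linked b a.
Proof.
elim=> [u v /edge_sym|u|u v w _ uv _ vw]; [exact: rt_step | exact: rt_refl |].
exact: rt_trans vw uv.
Qed.

Lemma F_linked x a b : F x -> linked a b -> x a = x b.
Proof. by move=> Fx; elim=> [u v [_ _ _ ->]|u|u v w _ -> _ ->]. Qed.

Lemma linked_O a b : linked a b -> a \in O -> b \in O.
Proof. by elim=> [u v [] //|//|u v w _ uv _ vw /uv /vw]. Qed.

Lemma phi_O B b : B \in phi -> b \in B -> b \in O.
Proof. by case/phiP => a aO Bmem /Bmem[]. Qed.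

Lemma phi_linked B a b : B \in phi -> a \in B -> b \in B -> linked a b.
Proof.
case/phiP => c cO Bmem /Bmem[_ ca] /Bmem[_ cb].
exact: rt_trans (linked_sym ca) cb.
Qed.

Lemma phi_linked_closed B a b : B \in phi -> a \in B -> linked a b -> b \in B.
Proof.
move=> /[dup] Bphi /phiP[c cO Bmem] /Bmem[aO ca] ab; apply/Bmem.
by split; [apply: linked_O ab aO | apply: rt_trans ca ab].
Qed.

Lemma phi_covers_O a : a \in O -> exists2 B, B \in phi & a \in B.
Proof.
move=> aO; exists [set b | `[< b \in O /\ linked a b >]]; last first.
  by rewrite inE; apply/asboolP; split=> //; apply: rt_refl.
by apply/phiP; exists a => // b; rewrite inE; split=> /asboolP.
Qed.

Lemma phi_eq B1 B2 p : B1 \in phi -> B2 \in phi -> p \in B1 -> p \in B2 -> B1 = B2.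
Proof.
move=> B1phi B2phi pB1 pB2; apply/setP => b; apply/idP/idP => bB.
  exact: phi_linked_closed B2phi pB2 (phi_linked B1phi pB1 bB).
exact: phi_linked_closed B1phi pB1 (phi_linked B2phi pB2 bB).
Qed.

Definition Cpi := [set [set c] | c in C].
Definition pi := phi :|: Cpi.
Definition top_block := pblock phi (hat1 tau).

Lemma set1_Cpi c : c \in C -> [set c] \in Cpi.
Proof. exact: imset_f. Qed.

Lemma CpiP B : B \in Cpi -> exists2 c, c \in C & B = [set c].
Proof. by case/imsetP => c cC ->; exists c. Qed.

Lemma phi_Cpi B : B \in phi -> B \in Cpi -> False.
Proof.
by move=> Bphi /CpiP[c cC Bc]; apply: (CO_disjoint cC); apply: phi_O Bphi _; rewrite Bc set11.
Qed.

Lemma phi_pi B : B \in phi -> B \in pi. Proof. by move=> Bphi; rewrite inE Bphi. Qed.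

Lemma Cpi_pi B : B \in Cpi -> B \in pi. Proof. by move=> BC; rewrite inE BC orbT. Qed.

Lemma piP B : B \in pi -> B \in phi \/ B \in Cpi.
Proof. by rewrite inE => /orP. Qed.

Lemma pi_eq B1 B2 p : B1 \in pi -> B2 \in pi -> p \in B1 -> p \in B2 -> B1 = B2.
Proof.
case/piP => [B1phi|/CpiP[c1 c1C ->]] /piP[B2phi|/CpiP[c2 c2C ->]]; first exact: phi_eq.
- by move=> pB1 /set1P pc2; case: (CO_disjoint c2C); rewrite -pc2 (phi_O B1phi pB1).
- by move=> /set1P pc1 pB2; case: (CO_disjoint c1C); rewrite -pc1 (phi_O B2phi pB2).
- by move=> /set1P -> /set1P ->.
Qed.

Lemma pi_trivIset : trivIset pi.
Proof. by apply: trivIset_eq => B1 B2 p; apply: pi_eq. Qed.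

Lemma cover_pi p : p \in cover pi.
Proof.
apply/bigcupP; case: (leqP (lvl p) k) => [pC|pO].
  by exists [set p]; rewrite ?set11 // Cpi_pi // set1_Cpi ?inC.
have [B Bphi pB] : exists2 B, B \in phi & p \in B by apply: phi_covers_O; rewrite inO.
by exists B; rewrite ?phi_pi.
Qed.

Lemma pblock_pi p : pblock pi p \in pi. Proof. exact/pblock_mem/cover_pi. Qed.

Lemma mem_pblock_pi p : p \in pblock pi p. Proof. by rewrite mem_pblock cover_pi. Qed.

Lemma def_pblock_pi B p : B \in pi -> p \in B -> pblock pi p = B.
Proof. exact: def_pblock pi_trivIset. Qed.

Lemma pblock_C p : p \in C -> pblock pi p = [set p].
Proof. by move=> pC; apply: def_pblock_pi (set11 p); apply/Cpi_pi/set1_Cpi. Qed.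

Lemma pblock_O p : p \in O -> pblock pi p \in phi.
Proof.
move=> pO; case/piP: (pblock_pi p) => // /CpiP[c cC pc].
by have := mem_pblock_pi p; rewrite pc => /set1P pc'; case: (CO_disjoint cC); rewrite -pc'.
Qed.

Lemma top_blockP : [/\ top_block \in phi, hat1 tau \in top_block & top_block \in pi].
Proof.
have [B Bphi hat1B] := phi_covers_O hat1_O.
have -> : top_block = B.
  by apply: def_pblock Bphi hat1B; apply: trivIset_eq => B1 B2 p; apply: phi_eq.
by split=> //; apply: phi_pi.
Qed.

Lemma hat0_pi : [set hat0 tau] \in pi.
Proof. exact/Cpi_pi/set1_Cpi/hat0_C. Qed.

Lemma pblock_hat0 : pblock pi (hat0 tau) = [set hat0 tau].
Proof. exact/pblock_C/hat0_C. Qed.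

Lemma pblock_hat1 : pblock pi (hat1 tau) = top_block.
Proof. by case: top_blockP => _ hat1T Tpi; apply: def_pblock_pi. Qed.

Definition rep (B : {set PT}) : PT := odflt (hat0 tau) [pick p in B].

Lemma rep_set1 c : rep [set c] = c.
Proof. by rewrite /rep; case: pickP => [q /set1P|/(_ c)] //; rewrite set11. Qed.

Lemma pi_block_nonempty B : B \in pi -> exists p, p \in B.
Proof.
case/piP => [/phiP[a aO Bmem]|/CpiP[c _ ->]]; last by exists c; rewrite set11.
by exists a; apply/Bmem; split=> //; apply: rt_refl.
Qed.

Lemma rep_pi B : B \in pi -> rep B \in B.
Proof.
by case/pi_block_nonempty => p pB; rewrite /rep; case: pickP => [//|/(_ p)]; rewrite pB.
Qed.

Lemma pblock_rep B : B \in pi -> pblock pi (rep B) = B.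
Proof. by move=> Bpi; apply/def_pblock_pi/rep_pi. Qed.

Lemma F_block_const x B a b : F x -> B \in pi -> a \in B -> b \in B -> x a = x b.
Proof.
move=> Fx /piP[Bphi aB bB|/CpiP[c _ ->] /set1P-> /set1P-> //].
exact: F_linked Fx (phi_linked Bphi aB bB).
Qed.

Lemma F_rep x p : F x -> x p = x (rep (pblock pi p)).
Proof. by move=> Fx; apply: F_block_const (rep_pi _); rewrite ?pblock_pi ?mem_pblock_pi. Qed.

Lemma F_mono x a b : F x -> a \in O -> ple a b -> x a <= x b.
Proof.
move=> Fx aO /orP[/eqP <- //|ab]; case: (F_chain Fx) => _ _ _ xO _.
apply: (@pcov_lvl_ind tau tau_gt0 k (fun a b => x a <= x b)) aO ab => [u v uO uv|u m v _].
  by apply: xO => //; apply: ple_O uO _; rewrite /ple /pcov (eqP uv) ltnSn orbT.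
exact: le_trans.
Qed.

Lemma tight_edge a b : a \in O -> b \in O -> pcov a b -> tight (inl (inr (a, b))) -> edge a b.
Proof.
move=> aO bO ab abT; split=> //; first by left.
by move=> x /abT /eqP; rewrite subr_eq0 eq_sym => /eqP.
Qed.

(* Only [x_hat0 >= 0] and order inequalities inside blocks can be tight. *)
Lemma tight_vanish v : v (hat0 tau) = 0 -> (forall a b, edge a b -> v a = v b) ->
  forall i, admissible i -> tight i -> form i v = 0.
Proof.
move=> v0 v_edge [[p|[a b]]|[ps q]] /= iA iT.
- have [->|p0] := eqVneq p (hat0 tau); first exact: v0.
  by case: (C_loose iA p0) => x /iT.
- by case/and3P: iA => aO bO ab; rewrite (v_edge a b (tight_edge aO bO ab iT)) subrr.
- case/andP: iA => /forallP ps_lvl /eqP q_lvl.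
  case: (chain_loose (ps := ps) (q := q)) => // [j|x /iT /eqP]; first exact/eqP.
  by rewrite subr_eq0 => /eqP.
Qed.

Local Notation qle := (qle (@ple tau) pi).
Local Notation qrel := (qrel (@ple tau) pi).
Local Notation qlt := (qlt (@ple tau) pi).
Local Notation qcov := (qcov (@ple tau) pi).

Lemma qrelP B B' : qrel B B' ->
  [/\ B \in pi, B' \in pi & exists p q, [/\ p \in B, q \in B' & ple p q]].
Proof.
by case=> Bpi B'pi /existsP[p /andP[pB /existsP[q /andP[qB' pq]]]]; split=> //; exists p, q.
Qed.

Lemma qrelI B B' p q : B \in pi -> B' \in pi -> p \in B -> q \in B' -> ple p q -> qrel B B'.
Proof.
move=> Bpi B'pi pB qB' pq; split=> //; apply/existsP; exists p; rewrite pB /=.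
by apply/existsP; exists q; rewrite qB'.
Qed.

Lemma qle_pi B B' : qle B B' -> B \in pi /\ B' \in pi.
Proof. by elim=> [u v /qrelP[]|u v w _ [? _] _ [_ ?]]. Qed.

Lemma qle_phi B B' : qle B B' -> B \in phi -> B' \in phi.
Proof.
elim=> [u v /qrelP[_ vpi [p [q [pu qv pq]]]] uphi|u v w _ uv _ vw /uv /vw] //.
case/piP: vpi => // /CpiP[c cC vc]; case: (CO_disjoint cC).
by move: qv; rewrite vc => /set1P <-; apply: ple_O (phi_O uphi pu) pq.
Qed.

Lemma qle_Cpi B B' : qle B B' -> B \in Cpi -> B' \in Cpi -> ple (rep B) (rep B').
Proof.
elim=> [u v /qrelP[_ _ [p [q [pu qv pq]]]]|u v w uv IHuv vw IHvw] uC wC.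
  case/CpiP: uC pu => c _ -> /set1P pc; case/CpiP: wC qv => c' _ -> /set1P qc.
  by rewrite !rep_set1 -pc -qc.
case/piP: (qle_pi uv).2 => [vphi|vC]; last exact: ple_trans (IHuv uC vC) (IHvw vC wC).
by case: (phi_Cpi (qle_phi vw vphi) wC).
Qed.

Section RelativeInterior.
Variable z : PT -> R.
Hypothesis z_relint : in_relint z.

Lemma relint_step a b : a \in O -> (lvl a < lvl b)%N ->
  z a <= z b /\ (z a = z b -> linked a b).
Proof.
have [Fz zpos] := z_relint.
apply: (@pcov_lvl_ind tau tau_gt0 k (fun a b => z a <= z b /\ (z a = z b -> linked a b))).
  move=> u v uO uv; have vO : v \in O by apply: ple_O uO _; rewrite /ple (eqP uv) ltnSn orbT.
  have [_ _ _ zO _] := F_chain Fz; split=> [|zuv]; first exact: zO.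
  have uvA : admissible (inl (inr (u, v))) by rewrite /= uO vO uv.
  apply/rt_step/(tight_edge uO vO uv)/(contra_notP (zpos _ uvA)).
  by rewrite /= zuv subrr ltxx.
move=> u m v _ [zum umL] [zmv mvL]; split=> [|zuv]; first exact: le_trans zmv.
have zum' : z u = z m by apply/eqP; rewrite eq_le zum zuv zmv.
by apply: rt_trans (umL zum') (mvL _); rewrite -zum'.
Qed.

Lemma relint_lt a b : a \in O -> ple a b -> pblock pi a != pblock pi b -> z a < z b.
Proof.
move=> aO /orP[/eqP <-|ab]; first by rewrite eqxx.
have [zab abL] := relint_step aO ab; rewrite lt_neqAle zab andbT.
apply: contraNneq => zab'; have [B Bphi aB] := phi_covers_O aO.
by rewrite !(def_pblock_pi (phi_pi Bphi)) // (phi_linked_closed Bphi aB (abL zab')).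
Qed.

(* A strict order containing the quotient order: singletons are ordered by level,
   blocks of [phi] by the value of [z], and every singleton lies below every block. *)
Definition quot_lt (B B' : {set PT}) : Prop :=
  [\/ B \in Cpi /\ B' \in phi,
      [/\ B \in Cpi, B' \in Cpi & (lvl (rep B) < lvl (rep B'))%N] |
      [/\ B \in phi, B' \in phi & z (rep B) < z (rep B')]].

Lemma quot_lt_trans B1 B2 B3 : quot_lt B1 B2 -> quot_lt B2 B3 -> quot_lt B1 B3.
Proof.
case=> [[? ?]|[? ? lt12]|[? ? lt12]] [[? ?]|[? ? lt23]|[? ? lt23]];
  try by case: (@phi_Cpi B2).
- by apply: Or31.
- by apply: Or31.
- by apply: Or32; split=> //; apply: ltn_trans lt23.
- by apply: Or33; split=> //; apply: lt_trans lt23.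
Qed.

Lemma quot_lt_irrefl B : ~ quot_lt B B.
Proof. by case=> [[BC /phi_Cpi]|[_ _]|[_ _]]; rewrite ?ltnn ?ltxx. Qed.

Lemma qle_quot_lt B B' : qle B B' -> B = B' \/ quot_lt B B'.
Proof.
elim=> [u v uv|u v w _ [->|uv] _ [<-|vw]]; [|by left|by right|by right|];
  last by right; apply: quot_lt_trans vw.
have [upi vpi [p [q [pu qv pq]]]] := qrelP uv.
have [<-|neq] := eqVneq u v; [by left | right].
case/piP: upi => [uphi|uC]; case/piP: vpi => [vphi|vC].
- apply: Or33; split=> //.
  rewrite -(F_block_const z_relint.1 (phi_pi uphi) pu (rep_pi (phi_pi uphi))).
  rewrite -(F_block_const z_relint.1 (phi_pi vphi) qv (rep_pi (phi_pi vphi))).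
  apply: relint_lt (phi_O uphi pu) pq _.
  by rewrite (def_pblock_pi (phi_pi uphi) pu) (def_pblock_pi (phi_pi vphi) qv).
- by case: (phi_Cpi (qle_phi (t_step _ _ _ _ uv) uphi) vC).
- by apply: Or31.
- apply: Or32; split=> //; move: neq pq.
  case/CpiP: uC pu => c _ -> /set1P ->; case/CpiP: vC qv => c' _ -> /set1P ->.
  by rewrite !rep_set1 /ple => neq /orP[/eqP cc'|//]; rewrite cc' eqxx in neq.
Qed.
End RelativeInterior.

Lemma pi_compatible : compatible (@ple tau) pi.
Proof.
have [z zR] := face_relint (@chain_formD R tau k) F_chain_face F_neq0.
move=> B B' /(qle_quot_lt zR)[//|BB'] /(qle_quot_lt zR)[//|B'B].
by case: (quot_lt_irrefl (quot_lt_trans BB' B'B)).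
Qed.

Lemma qlt_trans B1 B2 B3 : qlt B1 B2 -> qlt B2 B3 -> qlt B1 B3.
Proof.
move=> [le12 ne12] [le23 ne23]; split=> [|eq13]; first exact: t_trans le23.
by rewrite -eq13 in le23; apply: ne12; apply: pi_compatible le23.
Qed.

Lemma qlt_irrefl B : ~ qlt B B. Proof. by case. Qed.

Lemma qle_refl B : B \in pi -> qle B B.
Proof.
by move=> Bpi; apply/t_step/(qrelI Bpi Bpi (rep_pi Bpi) (rep_pi Bpi)); rewrite /ple eqxx.
Qed.

Lemma qlt_set1 a b : a \in C -> b \in C -> qlt [set a] [set b] -> (lvl a < lvl b)%N.
Proof.
move=> aC bC [ab neq]; have := qle_Cpi ab (set1_Cpi aC) (set1_Cpi bC).
by rewrite !rep_set1 /ple => /orP[/eqP eq_ab|//]; rewrite eq_ab in neq.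
Qed.

Lemma qlt_set1I a b : a \in C -> b \in C -> (lvl a < lvl b)%N -> qlt [set a] [set b].
Proof.
move=> aC bC ab; split=> [|/setP/(_ b)]; last first.
  by rewrite !inE eqxx => /eqP ba; rewrite ba ltnn in ab.
apply/t_step/(qrelI (Cpi_pi (set1_Cpi aC)) (Cpi_pi (set1_Cpi bC)) (set11 a) (set11 b)).
by rewrite /ple ab orbT.
Qed.

Lemma qlt_set1_phi a A : a \in C -> A \in phi -> qlt [set a] A.
Proof.
move=> aC Aphi; have Apt := rep_pi (phi_pi Aphi); split=> [|aA]; last first.
  by apply: (phi_Cpi Aphi); rewrite -aA set1_Cpi.
apply/t_step/(qrelI (Cpi_pi (set1_Cpi aC)) (phi_pi Aphi) (set11 a) Apt).
by move: aC (phi_O Aphi Apt); rewrite inC inO /ple => /leq_ltn_trans/[apply] ->; rewrite orbT.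
Qed.

Lemma qcov_set1_lvl a b : a \in C -> b \in C -> qcov [set a] [set b] -> lvl b = (lvl a).+1.
Proof.
move=> aC bC [ab no_mid]; have lt_ab := qlt_set1 aC bC ab.
apply/eqP; rewrite eqn_leq lt_ab andbT leqNgt; apply/negP => lt_Sab.
have [m lm] : exists m : PT, lvl m = (lvl a).+1.
  by apply: (exists_lvl tau_gt0); have := lvl_le_max b; lia.
have mC : m \in C by move: bC; rewrite !inC lm; lia.
by apply: no_mid; exists [set m]; split; apply: qlt_set1I; rewrite ?lm.
Qed.

Lemma qcov_set1_phi_lvl a A : a \in C -> A \in phi -> qcov [set a] A -> lvl a = k.
Proof.
move=> aC Aphi [_ no_mid]; apply/eqP; rewrite eqn_leq -inC aC leqNgt; apply/negP => lt_ak.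
have [m lm] : exists m : PT, lvl m = (lvl a).+1 by apply: (exists_lvl tau_gt0); lia.
have mC : m \in C by rewrite inC lm.
by apply: no_mid; exists [set m]; split; [apply: qlt_set1I; rewrite ?lm | apply: qlt_set1_phi].
Qed.

Lemma pcov_qcov a b : a \in C -> b \in C -> pcov a b -> qcov [set a] [set b].
Proof.
move=> aC bC /eqP ab; split=> [|[D [aD Db]]]; first by apply: qlt_set1I; rewrite ?ab.
case/piP: (qle_pi aD.1).2 => [Dphi|/CpiP[d dC Dd]].
  by apply: (phi_Cpi (qle_phi Db.1 Dphi)); apply: set1_Cpi.
by rewrite Dd in aD Db; have := qlt_set1 aC dC aD; have := qlt_set1 dC bC Db; lia.
Qed.

Lemma exists_qcov_phi a B : a \in C -> lvl a = k -> B \in phi ->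
  exists2 A, A \in phi & qcov [set a] A /\ qle A B.
Proof.
move=> aC la Bphi; have [A [aA AB]] := cover_below qlt_trans qlt_irrefl (qlt_set1_phi aC Bphi).
case/piP: (qle_pi aA.1.1).2 => [Aphi|/CpiP[d dC Ad]].
  by exists A => //; split=> //; case: AB => [->|[]//]; apply/qle_refl/phi_pi.
by rewrite Ad in aA; have := qlt_set1 aC dC aA.1; move: dC; rewrite inC la; lia.
Qed.

Lemma qle_mono (y : {set PT} -> R) :
  (forall B B', B \in phi -> B' \in phi -> qcov B B' -> y B <= y B') ->
  forall B B', B \in phi -> qle B B' -> y B <= y B'.
Proof.
move=> y_cov B B' Bphi BB'; have [<-//|neq] := eqVneq B B'.
have BB'lt : qlt B B' by split=> // eqBB'; rewrite eqBB' eqxx in neq.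
apply: (@cover_ind _ qlt qlt_trans qlt_irrefl (fun B => B \in phi) (fun B B' => y B <= y B'))
  Bphi BB'lt => [u v uphi [uv _]|u v w|u v uphi uv]; first exact: qle_phi uv uphi.
  exact: le_trans.
exact: y_cov (qle_phi uv.1.1 uphi) uv.
Qed.

Lemma F_qle_mono x B B' : F x -> B \in phi -> qle B B' -> x (rep B) <= x (rep B').
Proof.
move=> Fx + BB'; elim: BB' => [u v /qrelP[upi vpi [p [q [pu qv pq]]]] uphi|].
  rewrite -(F_block_const Fx upi pu (rep_pi upi)) -(F_block_const Fx vpi qv (rep_pi vpi)).
  exact: F_mono Fx (phi_O uphi pu) pq.
move=> u v w uv IHuv _ IHvw uphi.
exact: le_trans (IHuv uphi) (IHvw (qle_phi uv uphi)).
Qed.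

Lemma edge_pblock a b : edge a b -> pblock pi a = pblock pi b.
Proof.
move=> ab; have aO : a \in O by case: ab.
apply/esym/def_pblock_pi; first exact: pblock_pi.
exact: phi_linked_closed (pblock_O aO) (mem_pblock_pi a) (rt_step _ _ _ _ ab).
Qed.

Lemma exists_ple_lvl b : b \in O -> exists2 q : PT, lvl q = k.+1 & ple q b.
Proof.
rewrite inO => kb; have [lb|neq] := eqVneq (lvl b) k.+1; first by exists b; rewrite /ple ?eqxx.
have [q lq] : exists q : PT, lvl q = k.+1.
  by apply: (exists_lvl tau_gt0); have := lvl_le_max b; lia.
by exists q; rewrite // /ple lq ltn_neqAle [k.+1 == _]eq_sym neq kb orbT.
Qed.

Lemma satchain_path a s A : a \in C -> all (fun B => B \in Cpi) s -> A \in phi ->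
  satchain (@ple tau) pi [set a] s A ->
  path (@pcov tau) a (map rep s) /\ lvl (last a (map rep s)) = k.
Proof.
move=> + + Aphi; elim: s a => [|B s IH] a aC /=; first by move=> _ /(qcov_set1_phi_lvl aC Aphi).
case/andP => /CpiP[b bC ->] sC [ab bs]; rewrite rep_set1.
by have [bs_path ->] := IH b bC sC bs; rewrite /pcov (qcov_set1_lvl aC bC ab) eqxx.
Qed.

Lemma path_satchain a cs A : a \in C -> all (fun c => c \in C) cs -> path (@pcov tau) a cs ->
  qcov [set last a cs] A -> satchain (@ple tau) pi [set a] [seq [set c] | c <- cs] A.
Proof.
elim: cs a => [//|c cs IH] a aC /= /andP[cC csC] /andP[ac cs_path] csA.
by split; [apply: pcov_qcov | apply: IH].
Qed.

Local Notation quot_poly := (quot_poly (@ple tau) pi Cpi phi [set hat0 tau] top_block).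

Lemma quot_poly_of_face x : F x -> quot_poly (fun B => x (rep B)).
Proof.
move=> Fx; have [x0 x1 xC _ xch] := F_chain Fx; have [Tphi hat1T Tpi] := top_blockP.
split=> [|||B B' Bphi _ [[BB' _] _]|s A sC Aphi sA]; first by rewrite rep_set1.
- by rewrite -(F_block_const Fx Tpi hat1T (rep_pi Tpi)).
- by move=> B /CpiP[c cC ->]; rewrite rep_set1; apply: xC.
- exact: F_qle_mono.
have [s_path s_last] := satchain_path hat0_C sC Aphi sA.
have s_size : size (map rep s) = k by rewrite -s_last lvl_last_path.
have [q lq qA] := exists_ple_lvl (phi_O Aphi (rep_pi (phi_pi Aphi))).
apply: le_trans (F_mono Fx (_ : q \in O) qA); last by rewrite inO lq.
by rewrite -(big_map rep predT x); apply: (chain_ineq_pathP k x).1 xch _ _ s_path s_size lq.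
Qed.

Lemma quot_poly_chain (y : {set PT} -> R) : quot_poly y ->
  forall cs q, path (@pcov tau) (hat0 tau) cs -> size cs = k -> lvl q = k.+1 ->
  \sum_(c <- cs) y (pblock pi c) <= y (pblock pi q).
Proof.
case=> _ _ _ yO ych cs q cs_path cs_size lq.
have csC : all (fun c => c \in C) cs.
  apply/(all_nthP (hat0 tau)) => i i_lt.
  by rewrite inC path_pcov_lvl // lvl_hat0 -cs_size.
have qO : q \in O by rewrite inO lq.
have last_lvl : lvl (last (hat0 tau) cs) = k by rewrite lvl_last_path // lvl_hat0 cs_size.
have lastC : last (hat0 tau) cs \in C by rewrite inC last_lvl.
have [A Aphi [lastA Aq]] := exists_qcov_phi lastC last_lvl (pblock_O qO).
have cs_Cpi : all (fun B => B \in Cpi) [seq [set c] | c <- cs].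
  by apply/allP => B /mapP[c c_cs ->]; apply/set1_Cpi/(allP csC).
have -> : \sum_(c <- cs) y (pblock pi c) = \sum_(B <- [seq [set c] | c <- cs]) y B.
  by rewrite big_map; apply: eq_big_seq => c /(allP csC) cC; rewrite pblock_C.
apply: le_trans (qle_mono yO Aphi Aq).
exact: ych cs_Cpi Aphi (path_satchain hat0_C csC cs_path lastA).
Qed.

Lemma face_of_quot_poly y : quot_poly y -> F (fun p => y (pblock pi p)).
Proof.
move=> /[dup] Qy [y0 y1 yC yO _].
apply: (face_of_tight (@chain_formD R tau k) F_chain_face F_neq0); last first.
  apply: tight_vanish => [|a b /edge_pblock -> //]; by rewrite pblock_hat0.
apply/chain_polyE; split=> [||p pC|a b aO bO ab|]; first by rewrite pblock_hat0.
- by rewrite pblock_hat1.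
- by rewrite pblock_C //; apply/yC/set1_Cpi.
- apply: (qle_mono yO (pblock_O aO)).
  apply/t_step/(qrelI (pblock_pi a) (pblock_pi b) (mem_pblock_pi a) (mem_pblock_pi b)).
  by rewrite /ple (eqP ab) ltnSn orbT.
exact/chain_ineq_pathP/quot_poly_chain.
Qed.

Definition free_blocks := pi :\ [set hat0 tau] :\ top_block.

Lemma free_blocksP B : B \in free_blocks -> [/\ B \in pi, hat0 tau \notin B & hat1 tau \notin B].
Proof.
rewrite !in_setD1 => /and3P[BT B0 Bpi]; split=> //; [apply: contraNN B0 | apply: contraNN BT].
  by move=> hat0B; rewrite -(def_pblock_pi Bpi hat0B) pblock_hat0.
by move=> hat1B; rewrite -(def_pblock_pi Bpi hat1B) pblock_hat1.
Qed.

Lemma pblock_not_free p : pblock pi p \notin free_blocks ->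
  pblock pi p = [set hat0 tau] \/ pblock pi p = top_block.
Proof. by rewrite !in_setD1 pblock_pi andbT negb_and !negbK => /orP[] /eqP; [right | left]. Qed.

Definition indicator (B : {set PT}) (t : PT) : R := (t \in B)%:R.

Lemma indicator_pblock B p : B \in pi -> indicator B p = (pblock pi p == B)%:R.
Proof.
move=> Bpi; rewrite /indicator; congr (nat_of_bool _)%:R.
by apply/idP/eqP => [/(def_pblock_pi Bpi) //|<-]; apply: mem_pblock_pi.
Qed.

Section RelativeInteriorDimension.
Variable z : PT -> R.
Hypothesis z_relint : in_relint z.

Lemma face_perturb_block B : B \in free_blocks ->
  exists2 e, 0 < e & F (fun t => z t + e * indicator B t).
Proof.
case/free_blocksP => Bpi hat0B hat1B.
apply: (face_perturb (@chain_formD R tau k) F_chain_face F_neq0 z_relint).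
- by rewrite /indicator (negbTE hat0B).
- by rewrite /indicator (negbTE hat1B).
apply: tight_vanish => [|a b ab]; first by rewrite /indicator (negbTE hat0B).
by rewrite !indicator_pblock // (edge_pblock ab).
Qed.

Lemma affdim_ge_free : affdim_ge F #|free_blocks|.
Proof.
pose B i := enum_val (i : 'I_#|free_blocks|).
have [eps eps_gt0 F_eps] := fin_all_exists2 (fun i => face_perturb_block (enum_valP i)).
exists z; split; first exact: z_relint.1.
exists (fun i t => z t + eps i * indicator (B i) t); split=> //.
apply/row_freeP.
pose N : 'M_(#|PT|, _) := \matrix_(j, i) ((enum_val j == rep (B i))%:R / eps i).
exists N; apply/matrixP => i i'; rewrite !mxE.
under eq_bigr do rewrite !mxE addrC addKr.
rewrite -(big_enum_val (fun t => eps i * indicator (B i) t * ((t == rep (B i'))%:R / eps i'))).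
rewrite /= (bigD1 (rep (B i'))) //= big1 => [|t /negbTE->]; last by rewrite mul0r mulr0.
have [Bpi _ _] := free_blocksP (enum_valP i); have [B'pi _ _] := free_blocksP (enum_valP i').
rewrite eqxx mul1r addr0 indicator_pblock // pblock_rep //.
have [->|neq] := eqVneq i i'; first by rewrite eqxx mulr1 mulfV ?gt_eqF.
by rewrite (inj_eq enum_val_inj) eq_sym (negbTE neq) mulr0 mul0r.
Qed.
End RelativeInteriorDimension.

Lemma not_affdim_ge_free : ~ affdim_ge F #|free_blocks|.+1.
Proof.
case=> x0 [Fx0 [ys [Fys /row_freeP[N MN]]]].
pose A := \matrix_(i < #|free_blocks|.+1, j < #|free_blocks|)
  (ys i (rep (enum_val j)) - x0 (rep (enum_val j))).
pose E := \matrix_(j < #|free_blocks|, t < #|PT|) indicator (enum_val j) (enum_val t).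
(* Differences of points of F are constant on blocks and vanish on {hat0} and on the top
   block, so the rows factor through the free blocks. *)
suff ME : \matrix_(i, j) (ys i (enum_val j) - x0 (enum_val j)) = A *m E.
  by have := mulmx_max_rank A (E *m N); rewrite mulmxA -ME MN mxrank1 ltnn.
apply/matrixP => i j; rewrite !mxE; set t := enum_val j.
under eq_bigr do rewrite !mxE.
rewrite -(big_enum_val (fun B => (ys i (rep B) - x0 (rep B)) * indicator B t)) /=.
rewrite (F_rep t (Fys i)) (F_rep t Fx0).
have [free|not_free] := boolP (pblock pi t \in free_blocks).
  rewrite (bigD1 _ free) /= big1 => [|B /andP[/free_blocksP[Bpi _ _] neq]].
    by rewrite indicator_pblock ?pblock_pi // eqxx mulr1 addr0.
  by rewrite indicator_pblock // eq_sym (negbTE neq) mulr0.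
rewrite big1 => [|B Bfree]; last first.
  have [Bpi _ _] := free_blocksP Bfree.
  rewrite indicator_pblock //.
  by case: eqP => [tB|]; [rewrite tB Bfree in not_free | rewrite mulr0].
have [x00 x01 _ _ _] := F_chain Fx0; have [y0 y1 _ _ _] := F_chain (Fys i).
case: (pblock_not_free not_free) => ->; first by rewrite rep_set1 x00 y0 subrr.
have [_ hat1T Tpi] := top_blockP.
by rewrite -!(F_block_const _ Tpi hat1T (rep_pi Tpi)) ?x01 ?y1 ?subrr.
Qed.

Lemma card_free_blocks : (sumn tau - #|free_blocks| = #|O| - #|phi|)%N.
Proof.
have [Tphi _ Tpi] := top_blockP.
have T_neq0 : top_block != [set hat0 tau].
  by apply/eqP => T0; apply: (phi_Cpi Tphi); rewrite T0 set1_Cpi ?hat0_C.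
have card_pi_free : #|pi| = #|free_blocks|.+2.
  by rewrite (cardsD1 [set hat0 tau]) hat0_pi (cardsD1 top_block) !in_setD1 T_neq0 Tpi.
have card_pi : #|pi| = (#|phi| + #|C|)%N.
  rewrite cardsU (_ : phi :&: Cpi = set0) ?cards0 ?subn0; last first.
    by apply/setP => B; rewrite !inE; apply/negP => /andP[/phi_Cpi].
  by rewrite card_in_imset //; apply: in2W; apply: set1_inj.
have card_phi : (#|phi| <= #|O|)%N.
  rewrite -(card_in_imset (f := rep) (D := mem phi)) => [|B1 B2 /phi_pi B1pi /phi_pi B2pi eq12].
    by apply/subset_leq_card/subsetP => p /imsetP[B Bphi ->]; apply/(phi_O Bphi)/rep_pi/phi_pi.
  by rewrite -(pblock_rep B1pi) eq12 pblock_rep.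
have card_CO : (#|C| + #|O| = (sumn tau).+2)%N.
  by rewrite (_ : O = ~: C) ?cardsC ?card_Pt //; apply/setP => p; rewrite !inE -ltnNge.
lia.
Qed.
End OrderFace.

Theorem proposition3p4 (R : realFieldType) (tau : seq nat) (k : nat)
  (F : (Pt tau -> R) -> Prop) (phi : {set {set Pt tau}}) :
  all (fun t => 0 < t)%N tau -> (k <= size tau)%N ->
  is_face (@chain_poly R tau k) F -> (exists x, F x) ->
  (forall p, p \in Cset tau k -> p != hat0 tau -> ~ (forall x, F x -> x p = 0)) ->
  (forall (ps : 'I_k -> Pt tau) (q : Pt tau),
      (forall i : 'I_k, lvl (ps i) = i.+1) -> lvl q = k.+1 ->
      ~ (forall x, F x -> \sum_(i < k) x (ps i) = x q)) ->
  is_assoc_partition F (Oset tau k) (@pcov tau) phi ->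
  let Cpi := [set [set c] | c in Cset tau k] in
  let pi := phi :|: Cpi in
  let Tb := pblock phi (hat1 tau) in
  let Q := quot_poly (@ple tau) pi Cpi phi [set hat0 tau] Tb in
  [/\ compatible (@ple tau) pi,
      [set hat0 tau] \in pi /\ (forall B, B \in pi -> qle (@ple tau) pi [set hat0 tau] B),
      [/\ Tb \in phi, hat1 tau \in Tb & forall B, B \in pi -> qle (@ple tau) pi B Tb],
      [/\ (forall y : {set Pt tau} -> R, Q y -> F (fun p => y (pblock pi p))),
          (forall x, F x -> exists2 y, Q y & forall p, x p = y (pblock pi p)) &
          (forall y y' : {set Pt tau} -> R, Q y -> Q y' ->
             (forall p, y (pblock pi p) = y' (pblock pi p)) ->
             forall B, B \in pi -> y B = y' B)] &
      exists d, affdim F d /\ (sumn tau - d = #|Oset tau k| - #|phi|)%N].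
Proof.
move=> tau_gt0 k_le F_face F_neq0 C_loose chain_loose phiP Cpi pi Tb Q.
have [z z_relint] := face_relint (@chain_formD R tau k) (F_chain_face F_face) F_neq0.
have [Tphi hat1T Tpi] := top_blockP k_le phiP.
have hat0_pi := hat0_pi k phi.
split.
- exact: pi_compatible tau_gt0 F_face F_neq0 phiP.
- split=> // B Bpi.
  by apply/t_step/(qrelI hat0_pi Bpi (set11 _) (rep_pi phiP Bpi)); apply: ple_hat0.
- split=> // B Bpi.
  by apply/t_step/(qrelI Bpi Tpi (rep_pi phiP Bpi) hat1T); apply: ple_hat1.
- split=> [y Qy|x Fx|y y' _ _ yy' B Bpi].
  + exact: (face_of_quot_poly tau_gt0 k_le F_face F_neq0 C_loose chain_loose phiP Qy).
  + exists (fun B => x (rep B)); first exact: (quot_poly_of_face tau_gt0 k_le F_face phiP Fx).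
    by move=> p; apply: (F_rep phiP p Fx).
  + by rewrite -(pblock_rep phiP Bpi) yy'.
exists #|free_blocks k phi|; split; last exact: card_free_blocks tau_gt0 k_le phiP.
split; first exact: (affdim_ge_free k_le F_face F_neq0 C_loose chain_loose phiP z_relint).
exact: (not_affdim_ge_free k_le F_face phiP).
Qed.
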